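(* For all integers $n\ge 2$, $0\le r\le n$ and $0\le k\le n-2$, $$N_k^{n,r}=\frac{2(k+1)}{n-k-1}\sum_{i}\binom{k}{i}\binom{n-k+i-1}{r}\binom{n-i-1}{n-r},$$ where the sum runs over all integers $i$ with $0\le i\le k$.
   Context: A lattice path from $(0,0)$ to $(r,n-r)$ (with integers $n\ge 1$, $0\le r\le n$) is a sequence of lattice points $v_0=(0,0),v_1,\dots,v_n=(r,n-r)$ with each step $v_i-v_{i-1}\in\{(1,0),(0,1)\}$ (an E step or an N step); its vertex set is $\{v_0,\dots,v_n\}$. For $k\ge 0$, $N_k^{n,r}$ denotes the number of ordered pairs $(P,Q)$ of lattice paths from $(0,0)$ to $(r,n-r)$ such that the intersection of their vertex sets, with the two points $(0,0)$ and $(r,n-r)$ removed, has exactly $k$ elements. Binomial coefficients $\binom{a}{b}$ with $a\ge 0$ are $0$ if $b<0$ or $b>a$. *)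

From mathcomp Require Import all_boot all_order all_algebra.
Set Implicit Arguments. Unset Strict Implicit. Unset Printing Implicit Defensive.

(* A lattice path with n steps is encoded by its step sequence:
   true = E step (1,0), false = N step (0,1). *)
Definition vertex (n : nat) (p : n.-tuple bool) (i : nat) : nat * nat :=
  (count id (take i p), count negb (take i p)).

Definition verts (n : nat) (p : n.-tuple bool) : seq (nat * nat) :=
  [seq vertex p i | i <- iota 0 n.+1].

Definition is_path (n r : nat) (p : n.-tuple bool) : bool :=
  last (0, 0) (verts p) == (r, n - r).

Definition common_inner (n r : nat) (p q : n.-tuple bool) : nat :=
  size [seq v <- undup (verts p) |
         [&& v \in verts q, v != (0, 0) & v != (r, n - r)]].

Definition Nk (n r k : nat) : nat :=
  #|[set pq : n.-tuple bool * n.-tuple bool |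
      [&& is_path r pq.1, is_path r pq.2 & common_inner r pq.1 pq.2 == k]]|.

(* The i-th vertex of any path
   has coordinate sum i, so two paths of the same length can only share
   vertices of equal index, and they share v_i iff they have taken equally
   many E steps among their first i steps.  Let M(n,a,b,z) ([Nmeet_ge]) be the
   number of pairs of paths with a, resp. b, E steps sharing at least z of the
   vertices v_1, ..., v_n.  Deleting the last steps gives a Pascal-type
   recursion in which z drops by one exactly when the endpoints agree, i.e.
   when a = b; for b <= a it is solved by  sum_i C(z,i) C(n-z+i,a) C(n-i,n-b)
   ([Fmeet]).  Since the endpoint is always shared and the origin is never
   counted, N_k^{n,r} = M(n,r,r,k+1) - M(n,r,r,k+2); multiplied by n-k-1, this
   difference of two closed forms becomes 2(k+1) times the stated sum, term by
   term, through the absorption identities for binomial coefficients. *)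

From mathcomp Require Import all_boot all_order all_algebra.
From mathcomp Require Import zify ring.
Set Implicit Arguments. Unset Strict Implicit. Unset Printing Implicit Defensive.

Section TupleRcons.
Variables (T : finType) (n : nat).

Definition tuple_rcons (tx : n.-tuple T * T) : n.+1.-tuple T :=
  [tuple of rcons tx.1 tx.2].

Definition tuple_unrcons (t : n.+1.-tuple T) : n.-tuple T * T :=
  (belast_tuple (thead t) (behead_tuple t), last (thead t) (behead t)).

Lemma tuple_rconsK : cancel tuple_rcons tuple_unrcons.
Proof.
case=> [[[|y s] sP] x]; rewrite /tuple_rcons /tuple_unrcons /=.
  by congr pair; apply: val_inj.
congr pair; first apply: val_inj.
  all: by rewrite /thead (tnth_nth y) /= ?belast_rcons ?last_rcons.
Qed.

Lemma tuple_unrconsK : cancel tuple_unrcons tuple_rcons.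
Proof. by case=> [[|y s] sP]; apply: val_inj => //=; rewrite -lastI. Qed.

Lemma big_tuple_rcons (R : Type) (idx : R) (op : Monoid.com_law idx)
    (F : n.+1.-tuple T -> R) :
  \big[op/idx]_(t : n.+1.-tuple T) F t =
  \big[op/idx]_(t : n.-tuple T) \big[op/idx]_(x : T) F (tuple_rcons (t, x)).
Proof.
rewrite (reindex tuple_rcons); last first.
  by exists tuple_unrcons => tx _; [exact: tuple_rconsK | exact: tuple_unrconsK].
by rewrite pair_bigA.
Qed.

End TupleRcons.

Definition east (p : seq bool) (i : nat) : nat := count id (take i p).

Definition meetings (n : nat) (p q : seq bool) : nat :=
  count (fun i => east p i == east q i) (iota 1 n).

Definition meet_ge (n a b z : nat) (p q : seq bool) : bool :=
  [&& count id p == a, count id q == b & z <= meetings n p q].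

Definition Nmeet_ge (n a b z : nat) : nat :=
  \sum_(p : n.-tuple bool) \sum_(q : n.-tuple bool) meet_ge n a b z p q.

Lemma count_rcons_id (p : seq bool) (x : bool) : count id (rcons p x) = count id p + x.
Proof. by rewrite -cats1 count_cat /= addn0. Qed.

Lemma meetings_rcons n (p q : seq bool) x y : size p = n -> size q = n ->
  meetings n.+1 (rcons p x) (rcons q y) =
  meetings n p q + (count id p + x == count id q + y).
Proof.
move=> sp sq; rewrite /meetings -[n.+1]addn1 iotaD count_cat /= addn0 add1n.
congr addn; last by rewrite /east !take_oversize ?size_rcons ?sp ?sq // !count_rcons_id.
apply: eq_in_count => i; rewrite mem_iota => /andP[_ ilen].
by rewrite /east -!cats1 !takel_cat // ?sp ?sq; lia.
Qed.

Lemma meet_ge_rcons n a b z (p q : n.-tuple bool) (x y : bool) :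
  meet_ge n.+1 a b z (rcons p x) (rcons q y) =
  [&& x <= a, y <= b & meet_ge n (a - x) (b - y) (if a == b then z.-1 else z) p q].
Proof.
rewrite /meet_ge meetings_rcons ?size_tuple // !count_rcons_id.
have [pa|pa] := eqVneq (count id p + x) a; last first.
  by apply/esym/negbTE/and3P => -[xa _ /and3P[/eqP pxa _ _]]; move/eqP: pa; lia.
have [qb|qb] := eqVneq (count id q + y) b; last first.
  rewrite andbF; apply/esym/negbTE/and3P => -[_ yb /and3P[_ /eqP qyb _]].
  by move/eqP: qb; lia.
rewrite -pa -qb !leq_addl !addnK !eqxx /=.
case: eqP => _; last by rewrite addn0.
by case: z => [|z] //=; rewrite addn1 ltnS.
Qed.

Lemma Nmeet_ge_rcons n a b z :
  Nmeet_ge n.+1 a b z =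
  \sum_(x : bool) \sum_(y : bool)
    (if (x <= a) && (y <= b)
     then Nmeet_ge n (a - x) (b - y) (if a == b then z.-1 else z) else 0).
Proof.
rewrite /Nmeet_ge big_tuple_rcons /=.
under eq_bigr => p _ do
  under eq_bigr => x _ do rewrite big_tuple_rcons /= exchange_big /=.
rewrite exchange_big /=; apply: eq_bigr => x _.
rewrite exchange_big /=; apply: eq_bigr => y _.
under eq_bigr => p _ do under eq_bigr => q _ do rewrite meet_ge_rcons.
by case: (x <= a); case: (y <= b) => //=; rewrite big1 // => p _; rewrite big1.
Qed.

Lemma meetings_sym n p q : meetings n p q = meetings n q p.
Proof. by apply: eq_count => i; rewrite eq_sym. Qed.

Lemma meetings_le n p q : meetings n p q <= n.
Proof. by rewrite /meetings (leq_trans (count_size _ _)) ?size_iota. Qed.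

Lemma Nmeet_ge_sym n a b z : Nmeet_ge n a b z = Nmeet_ge n b a z.
Proof.
rewrite /Nmeet_ge exchange_big; apply: eq_bigr => q _; apply: eq_bigr => p _.
by rewrite /meet_ge meetings_sym andbCA.
Qed.

Lemma Nmeet_ge_east_gt n a b z : n < a -> Nmeet_ge n a b z = 0.
Proof.
move=> ltna; rewrite /Nmeet_ge big1 // => p _; rewrite big1 // => q _.
have lepn : count id p <= n by rewrite -{2}(size_tuple p) count_size.
by rewrite /meet_ge; case: eqP => // eqpa; move: ltna; rewrite -eqpa ltnNge lepn.
Qed.

Lemma Nmeet_ge_gt n a b z : n < z -> Nmeet_ge n a b z = 0.
Proof.
move=> ltnz; rewrite /Nmeet_ge big1 // => p _; rewrite big1 // => q _.
rewrite /meet_ge leqNgt (leq_ltn_trans (meetings_le n p q) ltnz).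
by rewrite !andbF.
Qed.

Lemma Nmeet_ge0 a b z : Nmeet_ge 0 a b z = [&& a == 0, b == 0 & z == 0].
Proof.
rewrite /Nmeet_ge (big_pred1 [tuple]) => [|t]; last by apply/esym/eqP; apply: tuple0.
rewrite (big_pred1 [tuple]) => [|t]; last by apply/esym/eqP; apply: tuple0.
by rewrite /meet_ge /meetings /= leqn0 !(eq_sym 0).
Qed.

Definition Fmeet (n a b z : nat) : nat :=
  \sum_(i < z.+1) 'C(z, i) * 'C(n - z + i, a) * 'C(n - i, n - b).

Lemma Fmeet_gt n a b z : n < a -> z <= n -> Fmeet n a b z = 0.
Proof.
move=> ltna lezn; rewrite /Fmeet big1 // => i _.
by rewrite (bin_small (n := n - z + i)) ?muln0 ?mul0n //; have := ltn_ord i; lia.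
Qed.

Lemma Fmeet00 n z : z <= n -> Fmeet n 0 0 z = 1.
Proof.
move=> lezn; rewrite /Fmeet big_ord_recl /= bin0 !subn0 binn bin0 /= big1 // => i _.
by rewrite /bump /= (bin_small (n := n - _)) ?muln0 //; have := ltn_ord i; lia.
Qed.

Lemma Fmeetnn n z : z <= n -> Fmeet n n n z = 1.
Proof.
move=> lezn; rewrite /Fmeet big_ord_recr /= binn subnK // binn subnn bin0 big1 // => i _.
by rewrite (bin_small (n := n - z + i)) ?muln0 ?mul0n //; have := ltn_ord i; lia.
Qed.

Lemma Fmeet_last n a b : b < a -> Fmeet n.+1 a b n.+1 = 0.
Proof.
move=> ltba; rewrite /Fmeet big1 // => i _; have := ltn_ord i.
have [ltia|leai] := ltnP (n.+1 - n.+1 + i) a.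
  by rewrite (bin_small ltia) muln0 mul0n.
by move=> lein; rewrite (bin_small (n := n.+1 - i)) ?muln0 //; lia.
Qed.

Lemma sum_binS w (g : nat -> nat) :
  \sum_(i < w.+2) 'C(w.+1, i) * g i = \sum_(i < w.+1) 'C(w, i) * (g i + g i.+1).
Proof.
rewrite big_ord_recl /= bin0 mul1n.
under eq_bigr => i _ do rewrite /bump /= binS mulnDl.
under [in RHS]eq_bigr => i _ do rewrite mulnDr.
rewrite !big_split /= addnA [in RHS]big_ord_recl /= bin0 mul1n.
by rewrite big_ord_recr /= bin_small // mul0n addn0.
Qed.

Lemma FmeetS_b0 n a z : z <= n ->
  Fmeet n.+1 a.+1 0 z = Fmeet n a 0 z + Fmeet n a.+1 0 z.
Proof.
move=> lezn; rewrite /Fmeet -big_split; apply: eq_bigr => i _ /=.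
have leiz : i <= z by rewrite -ltnS ltn_ord.
have -> : n.+1 - z + i = (n - z + i).+1 by lia.
have -> : 'C(n.+1 - i, n.+1 - 0) = 'C(n - i, n - 0).
  have [->|ipos] := posnP i; first by rewrite !subn0 !binn.
  by rewrite !bin_small //; lia.
rewrite binS; ring.
Qed.

Lemma FmeetS n a b z : b < n -> z <= n ->
  Fmeet n.+1 a.+1 b.+1 z =
  Fmeet n a b z + Fmeet n a b.+1 z + Fmeet n a.+1 b z + Fmeet n a.+1 b.+1 z.
Proof.
move=> ltbn lezn; rewrite /Fmeet -!big_split; apply: eq_bigr => i _ /=.
have leiz : i <= z by rewrite -ltnS ltn_ord.
have -> : n.+1 - z + i = (n - z + i).+1 by lia.
have -> : n.+1 - i = (n - i).+1 by lia.
have -> : n.+1 - b.+1 = (n - b.+1).+1 by lia.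
have -> : n - b = (n - b.+1).+1 by lia.
rewrite !binS; ring.
Qed.

Lemma FmeetS_diag n a z : a < n -> z <= n.+1 ->
  Fmeet n.+1 a.+1 a.+1 z =
  Fmeet n a a z.-1 + Fmeet n a.+1 a z.-1 + Fmeet n a.+1 a z.-1 + Fmeet n a.+1 a.+1 z.-1.
Proof.
move=> ltan; have Ena : n - a = (n - a.+1).+1 by lia.
case: z => [|w] lewn /=.
  rewrite /Fmeet !big_ord1 /= !bin0 !subn0 !addn0 !mul1n subSS Ena !binS -Ena.
  have lean := ltnW ltan.
  rewrite !bin_sub //; ring.
rewrite /Fmeet; under eq_bigr => i _ do rewrite -mulnA.
rewrite (sum_binS w (fun i => 'C(n.+1 - w.+1 + i, a.+1) * 'C(n.+1 - i, n.+1 - a.+1))).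
rewrite -!big_split; apply: eq_bigr => i _ /=.
have leiw : i <= w by rewrite -ltnS ltn_ord.
have -> : n.+1 - w.+1 + i.+1 = (n - w + i).+1 by lia.
have -> : n.+1 - i = (n - i).+1 by lia.
rewrite !subSS -subSS Ena !binS; ring.
Qed.

(* [Fmeet n a b z] equals [Nmeet_ge n a b z] only when [b <= a]. *)
Definition Fsym (n a b z : nat) : nat := Fmeet n (maxn a b) (minn a b) z.

Lemma Fsym_sym n a b z : Fsym n a b z = Fsym n b a z.
Proof. by rewrite /Fsym maxnC minnC. Qed.

Lemma Fsym_rec n a b z :
  a <= n.+1 -> b <= n.+1 -> z <= n.+1 -> (a != b -> z <= n) ->
  Fsym n.+1 a b z =
  \sum_(x : bool) \sum_(y : bool)
    (if (x <= a) && (y <= b)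
     then Fsym n (a - x) (b - y) (if a == b then z.-1 else z) else 0).
Proof.
wlog leba : a b / b <= a.
  move=> W lean lebn lezn neq_lez.
  have [leba|/ltnW leab] := leqP b a; first exact: W.
  rewrite Fsym_sym W //; last by rewrite eq_sym.
  rewrite exchange_big eq_sym.
  by apply: eq_bigr => y _; apply: eq_bigr => x _; rewrite andbC Fsym_sym.
move=> lean lebn lezn neq_lez; rewrite !big_bool /= !subn0 /Fsym.
case: a b leba lean lebn neq_lez => [|s] [|t] //= leba lean lebn neq_lez.
- by rewrite !Fmeet00 //; lia.
- by rewrite subn1 /= maxn0 minn0 !add0n FmeetS_b0 //; apply: neq_lez.
rewrite !subn1 /= eqSS.
have [eqts|neqts] := eqVneq s t.
  subst t; rewrite !maxnn !minnn.
  have [-> ->] : maxn s s.+1 = s.+1 /\ minn s s.+1 = s by lia.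
  have [-> ->] : maxn s.+1 s = s.+1 /\ minn s.+1 s = s by lia.
  have [eqsn|ltsn] := eqVneq s n.
    by subst s; rewrite Fmeetnn // Fmeetnn ?Fmeet_gt //; lia.
  by rewrite FmeetS_diag ?addnA //; lia.
have ltts : t < s by lia.
have [-> ->] : maxn s t = s /\ minn s t = t by lia.
have [-> ->] : maxn s t.+1 = s /\ minn s t.+1 = t.+1 by lia.
have [-> ->] : maxn s.+1 t = s.+1 /\ minn s.+1 t = t by lia.
have [-> ->] : maxn s.+1 t.+1 = s.+1 /\ minn s.+1 t.+1 = t.+1 by lia.
by rewrite FmeetS ?addnA //; lia.
Qed.

Lemma Nmeet_geE n a b z : z <= n -> Nmeet_ge n a b z = Fsym n a b z.
Proof.
elim: n a b z => [|n IH] a b z lezn.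
  move: lezn; rewrite leqn0 => /eqP->.
  rewrite Nmeet_ge0 /Fsym /Fmeet big_ord1 /= !sub0n addn0 bin0 bin0n mul1n muln1.
  by case: a b => [|a] [|b]; rewrite ?max0n ?maxn0 ?maxnSS.
wlog leba : a b / b <= a.
  move=> W; have [|/ltnW leab] := leqP b a; first exact: W.
  by rewrite Nmeet_ge_sym Fsym_sym W.
have [ltan|lean] := ltnP n.+1 a.
  by rewrite Nmeet_ge_east_gt // /Fsym Fmeet_gt //; lia.
have [eqab|neqab] := eqVneq a b; last first.
  rewrite Nmeet_ge_rcons (negbTE neqab).
  have [ltnz|lezn'] := ltnP n z.
    have -> : z = n.+1 by lia.
    rewrite /Fsym Fmeet_last; last by lia.
    by rewrite big1 // => x _; rewrite big1 // => y _; rewrite Nmeet_ge_gt ?if_same.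
  rewrite Fsym_rec ?(negbTE neqab) //; try lia.
  by apply: eq_bigr => x _; apply: eq_bigr => y _; case: ifP; rewrite ?IH.
rewrite Nmeet_ge_rcons Fsym_rec ?eqab ?eqxx //; try lia.
apply: eq_bigr => x _; apply: eq_bigr => y _; case: ifP; rewrite // IH //; lia.
Qed.

Lemma count_id_negb (s : seq bool) : count id s + count negb s = size s.
Proof. exact: count_predC. Qed.

Lemma vertex_sum n (p : n.-tuple bool) i : i <= n -> (vertex p i).1 + (vertex p i).2 = i.
Proof. by move=> lein; rewrite count_id_negb size_takel ?size_tuple. Qed.

Section PathVertices.
Variables (n : nat) (p q : n.-tuple bool).

Lemma eq_vertex i : i <= n -> (vertex p i == vertex q i) = (east p i == east q i).
Proof.
move=> lein; have := vertex_sum p lein; have := vertex_sum q lein.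
rewrite /vertex /east /= xpair_eqE; case: eqP => [->|] //= sq sp.
by apply/eqP; lia.
Qed.

Lemma uniq_verts : uniq (verts p).
Proof.
rewrite map_inj_in_uniq ?iota_uniq // => i j.
rewrite !mem_iota !add0n !ltnS => /andP[_ lein] /andP[_ lejn] eq_ij.
by rewrite -(vertex_sum p lein) -(vertex_sum p lejn) eq_ij.
Qed.

Lemma mem_verts i : i <= n -> (vertex p i \in verts q) = (east p i == east q i).
Proof.
move=> lein; apply/mapP/eqP => [[j]|eq_pq]; last first.
  by exists i; rewrite ?mem_iota ?add0n ?ltnS //; apply/eqP; rewrite eq_vertex // eq_pq.
rewrite mem_iota add0n ltnS => /andP[_ lejn] eq_pq.
have eq_ij : i = j by rewrite -(vertex_sum p lein) -(vertex_sum q lejn) eq_pq.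
by subst j; apply/eqP; rewrite -eq_vertex // eq_pq.
Qed.

Lemma vertex_eq0 i : i <= n -> (vertex p i == (0, 0)) = (i == 0).
Proof.
move=> lein; have := vertex_sum p lein.
by case: (vertex p i) => x y /= <-; rewrite addn_eq0 xpair_eqE.
Qed.

End PathVertices.

Lemma vertex_eq_end n (p : n.-tuple bool) r i : count id p = r -> i <= n ->
  (vertex p i == (r, n - r)) = (i == n).
Proof.
move=> cpr lein; have lern : r <= n by rewrite -cpr -{2}(size_tuple p) count_size.
apply/eqP/eqP => [eq_v|->]; first by have := vertex_sum p lein; rewrite eq_v /=; lia.
have := count_id_negb p; rewrite size_tuple /vertex take_oversize ?size_tuple // cpr.
by move=> sum_n; congr pair; lia.
Qed.

Lemma is_path_count n r (p : n.-tuple bool) : is_path r p = (count id p == r).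
Proof.
rewrite /is_path /verts -(nth_last (0, 0)) size_map size_iota (nth_map 0) ?size_iota //.
rewrite nth_iota // add0n /vertex take_oversize ?size_tuple //.
have := count_id_negb p; rewrite size_tuple xpair_eqE => sum_n.
by case: eqP => //= eq_pr; apply/eqP; lia.
Qed.

Lemma common_inner_meetings n r (p q : n.-tuple bool) : 0 < n ->
  count id p = r -> count id q = r -> common_inner r p q = (meetings n p q).-1.
Proof.
move=> n_gt0 cpr cqr.
rewrite /common_inner undup_id ?uniq_verts // size_filter /verts count_map.
rewrite (@eq_in_count _ _ (fun i => [&& east p i == east q i, i != 0 & i != n]));
  last first.
  move=> i; rewrite mem_iota add0n ltnS => /andP[_ lein] /=.
  by rewrite -/(verts q) mem_verts // vertex_eq0 // vertex_eq_end.
case: n n_gt0 p q cpr cqr => // n _ p q cpr cqr.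
have iota_split : iota 1 n.+1 = iota 1 n ++ [:: n.+1].
  by have := iotaD 1 n 1; rewrite addn1 add1n.
rewrite /meetings -[iota 0 n.+2]/(0 :: iota 1 n.+1) iota_split.
rewrite [in LHS]/= !count_cat /= andbF eqxx andbF !addn0 add0n.
have -> : east p n.+1 == east q n.+1.
  by rewrite /east !take_oversize ?size_tuple // cpr cqr.
rewrite addn1 /=; apply: eq_in_count => i.
rewrite mem_iota add1n => /andP[i_gt0 ltin].
by rewrite -lt0n i_gt0 (ltn_eqF ltin) andbT.
Qed.

Lemma meetings_gt0 n (p q : n.-tuple bool) : 0 < n ->
  count id p = count id q -> 0 < meetings n p q.
Proof.
move=> n_gt0 cpq; rewrite /meetings -has_count; apply/hasP; exists n.
  by rewrite mem_iota add1n ltnSn n_gt0.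
by rewrite /east !take_oversize ?size_tuple // cpq.
Qed.

Lemma Nk_meetings n r k : 0 < n ->
  Nk n r k = \sum_(p : n.-tuple bool) \sum_(q : n.-tuple bool)
               [&& count id p == r, count id q == r & meetings n p q == k.+1].
Proof.
move=> n_gt0; rewrite /Nk -sum1_card big_mkcond pair_bigA /=.
apply: eq_bigr => -[p q] _; rewrite inE /= !is_path_count.
have [cpr|] := eqVneq (count id p) r; have [cqr|] := eqVneq (count id q) r => //=.
rewrite common_inner_meetings //.
have := meetings_gt0 n_gt0 (etrans cpr (esym cqr)).
by case: (meetings n p q).
Qed.

Lemma Nk_Nmeet_ge n r k : 0 < n ->
  Nk n r k + Nmeet_ge n r r k.+2 = Nmeet_ge n r r k.+1.
Proof.
move=> n_gt0; rewrite Nk_meetings // /Nmeet_ge -big_split; apply: eq_bigr => p _.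
rewrite -big_split; apply: eq_bigr => q _; rewrite /meet_ge.
case: eqP => _ //=; case: eqP => _ //=.
by rewrite [k < _]leq_eqVlt eq_sym; case: ltngtP.
Qed.

Lemma Nk_Fmeet n r k : k.+2 <= n -> Nk n r k + Fmeet n r r k.+2 = Fmeet n r r k.+1.
Proof.
move=> lekn; have n_gt0 : 0 < n by lia.
have := @Nk_Nmeet_ge n r k n_gt0.
rewrite !Nmeet_geE; [|lia..].
by rewrite /Fsym !maxnn !minnn.
Qed.

Definition summand (n r k i : nat) : nat :=
  'C(k, i) * 'C(n - k + i - 1, r) * 'C(n - i - 1, n - r).

Lemma bin_weighted N s i : i <= s.+1 ->
  (N.+1 - i) * 'C(N, s) = (s.+1 - i) * 'C(N.+1, s.+1) + i * 'C(N, s.+1).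
Proof.
move=> leis; have [ltNs|lesN] := ltnP N s.
  by rewrite !bin_small ?muln0 //; apply: ltnW.
rewrite binS mulnDr addnAC -mulnDl subnK // mul_bin_left -mulnDl.
by congr (_ * _); lia.
Qed.

Lemma mul_summand n r k i N : k < n -> n - k.+1 + i = N.+1 ->
  (k + 1) * summand n r k i =
  (k.+1 - i) * 'C(k.+1, i) * 'C(N.+1, r) * 'C(n - i - 1, n - r).
Proof.
move=> ltkn eN; rewrite /summand.
have -> : n - k + i - 1 = N.+1 by lia.
by rewrite addn1 !mulnA -mul_bin_down.
Qed.

Lemma mul_summand_pred n r k i N : k < n -> n - k.+1 + i = N.+1 ->
  (k + 1) * (if i is j.+1 then summand n r k j else 0) =
  i * 'C(k.+1, i) * 'C(N, r) * 'C(n - i, n - r).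
Proof.
case: i => [|j] ltkn eN; first by rewrite muln0.
rewrite /summand.
have -> : n - k + j - 1 = N by lia.
have -> : n - j - 1 = n - j.+1 by lia.
by rewrite addn1 !mulnA -mul_bin_diag.
Qed.

Lemma Fmeet_term_diff n r k i : 0 < r -> r <= n -> k.+2 <= n -> i <= k.+1 ->
  (n - k - 1) * ('C(k.+1, i) * 'C(n - k.+1 + i, r) * 'C(n - i, n - r)) =
  (n - k - 1) * ('C(k.+1, i) * ('C(n - k.+2 + i, r) * 'C(n - i, n - r)
                                + 'C(n - k.+2 + i.+1, r) * 'C(n - i.+1, n - r)))
  + (k + 1) * summand n r k i
  + (k + 1) * (if i is j.+1 then summand n r k j else 0).
Proof.
case: r => // s _ lesn lekn leik; have ltkn : k < n by lia.
have [N eN] : exists N, n - k.+1 + i = N.+1 by exists (n - k.+2 + i); lia.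
have hV := mul_summand_pred s.+1 ltkn eN.
have hT := mul_summand s.+1 ltkn eN.
have -> : n - k.+2 + i = N by lia.
have -> : n - k.+2 + i.+1 = N.+1 by lia.
have -> : n - i.+1 = n - i - 1 by lia.
rewrite eN hV hT binS.
set m := n - k - 1; set c := 'C(k.+1, i); set A := 'C(N, s.+1); set B := 'C(N, s).
set X := 'C(n - i - 1, n - s.+1); set Y := 'C(n - i, n - s.+1).
have [leis|ltsi] := leqP i s.+1; last first.
  have X0 : X = 0 by rewrite /X bin_small //; lia.
  have Y0 : Y = 0 by rewrite /Y bin_small //; lia.
  by rewrite X0 Y0 !muln0.
have key : m * B = (s.+1 - i) * (A + B) + i * A.
  by rewrite /m /A /B -binS -bin_weighted //; congr (_ * _); lia.
have absorb : (n - i) * X = (s.+1 - i) * Y.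
  rewrite /X /Y; have := mul_bin_down (n - i) (n - s.+1); rewrite -subn1 => ->.
  by congr (_ * _); lia.
have ni : n - i = m + (k.+1 - i) by rewrite /m; lia.
(* Cancelling [m c A Y], both sides are [c Y] times the two sides of [key]. *)
transitivity (c * Y * (m * A + m * B)); first by ring.
rewrite key.
transitivity (m * c * A * Y + c * (A + B) * ((n - i) * X) + i * c * A * Y).
  by rewrite absorb; ring.
by rewrite ni; ring.
Qed.

Lemma Fmeet_diff n r k : r <= n -> k.+2 <= n ->
  (n - k - 1) * Fmeet n r r k.+1 =
  (n - k - 1) * Fmeet n r r k.+2 + 2 * (k + 1) * \sum_(i < k.+1) summand n r k i.
Proof.
move=> lern lekn; have [->|r_gt0] := posnP r.
  have -> : \sum_(i < k.+1) summand n 0 k i = 0.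
    rewrite big1 // => i _.
    by rewrite /summand (bin_small (n := n - i - 1)) ?muln0 //; lia.
  by rewrite muln0 addn0 !Fmeet00 //; lia.
have shiftT : \sum_(i < k.+2) summand n r k i = \sum_(i < k.+1) summand n r k i.
  by rewrite big_ord_recr /= /summand (@bin_small k k.+1) // !mul0n addn0.
have shiftV : \sum_(i < k.+2) (if nat_of_ord i is j.+1 then summand n r k j else 0) =
              \sum_(i < k.+1) summand n r k i.
  by rewrite big_ord_recl.
rewrite /Fmeet; under [in RHS]eq_bigr => i _ do rewrite -mulnA.
rewrite (sum_binS k.+1 (fun i => 'C(n - k.+2 + i, r) * 'C(n - i, n - r))) !big_distrr /=.
rewrite (eq_bigr _ (fun (i : 'I_k.+2) _ =>
  Fmeet_term_diff (i := i) r_gt0 lern lekn (ltn_ord i))).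
by rewrite !big_split /= -!big_distrr /= shiftT shiftV; ring.
Qed.

Unset Implicit Arguments.
Import GRing.Theory Num.Theory.
Local Open Scope ring_scope.

Theorem mainTheorem1 (n r k : nat) :
  (2 <= n)%N -> (r <= n)%N -> (k <= n - 2)%N ->
  (Nk n r k)%:R =
    ((2 * (k + 1))%N%:R / (n - k - 1)%N%:R) *
    \sum_(i < k.+1)
       ('C(k, i) * 'C(n - k + i - 1, r) * 'C(n - i - 1, n - r))%N%:R
    :> rat.
Proof.
move=> len lern lekn; have lek2n : (k.+2 <= n)%N by lia.
have m_gt0 : ((n - k - 1)%N%:R : rat) != 0 by rewrite pnatr_eq0; lia.
have Nk_mul : ((n - k - 1) * Nk n r k = 2 * (k + 1) * \sum_(i < k.+1) summand n r k i)%N.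
  apply/eqP; rewrite -(eqn_add2r ((n - k - 1) * Fmeet n r r k.+2)) -mulnDr.
  by rewrite Nk_Fmeet // Fmeet_diff // addnC.
rewrite -(mulKf m_gt0 (Nk n r k)%:R) -natrM Nk_mul natrM natr_sum.
by rewrite mulrA [_^-1 * _]mulrC.
Qed.
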